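(* Let $\mathbb{V}$ be a finite-dimensional real inner product space, $\mathcal{C}\subseteq\mathbb{V}$ a convex set, $\varphi:\mathbb{V}\to\mathbb{R}\cup\{+\infty\}$ a Legendre function, and $f:\mathcal{C}\to\mathbb{R}$ a function differentiable on $\operatorname{relint}\mathcal{C}$ satisfying $f(x)=\langle x,\nabla f(x)\rangle$ for all $x\in\mathcal{C}$. Then $f$ is $L$-smooth relative to $\varphi$ on $\mathcal{C}$ if and only if $$\langle x,\nabla f(x)-\nabla f(y)\rangle\le L\,D_\varphi(x\,\|\,y)\qquad\text{for all }x,y\in\operatorname{relint}\mathcal{C}.$$ Similarly, $f$ is $\mu$-strongly convex relative to $\varphi$ on $\mathcal{C}$ if and only if $$\langle x,\nabla f(x)-\nabla f(y)\rangle\ge \mu\,D_\varphi(x\,\|\,y)\qquad\text{for all }x,y\in\operatorname{relint}\mathcal{C}.$$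
   Context: A function $\varphi:\mathbb{V}\to\mathbb{R}\cup\{+\infty\}$ is Legendre if it is proper, lower semicontinuous, strictly convex and essentially smooth. Its Bregman divergence is $D_\varphi(x\,\|\,y)=\varphi(x)-\varphi(y)-\langle\nabla\varphi(y),x-y\rangle$ for $x\in\operatorname{dom}\varphi$, $y\in\operatorname{relint}\operatorname{dom}\varphi$ (here $\mathcal{C}\subseteq\operatorname{dom}\varphi$). $f$ is $L$-smooth relative to $\varphi$ on $\mathcal{C}$ (for $L>0$) if $L\varphi-f$ is convex on $\operatorname{relint}\mathcal{C}$; $f$ is $\mu$-strongly convex relative to $\varphi$ on $\mathcal{C}$ (for $\mu>0$) if $f-\mu\varphi$ is convex on $\operatorname{relint}\mathcal{C}$. *)

(* The finite-dimensional real inner product space V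
   is modelled as 'rV[R]_n (R : realType) with the standard dot product. *)
From HB Require Import structures.
From mathcomp Require Import all_boot all_order all_algebra.
From mathcomp Require Import all_classical all_reals all_analysis.
Set Implicit Arguments. Unset Strict Implicit. Unset Printing Implicit Defensive.
Import Order.TTheory GRing.Theory Num.Theory.
Import numFieldNormedType.Exports.
Local Open Scope classical_set_scope.
Local Open Scope ring_scope.

Section Defs.
Variables (R : realType) (n : nat).
Notation V := 'rV[R]_n.

Definition dotv (u v : V) : R := \sum_(i < n) u ord0 i * v ord0 i.

(* gradient: the vector of partial derivatives (Riesz representative of the
   differential w.r.t. dotv whenever f is differentiable) *)
Definition gradv (f : V -> R) (x : V) : V :=
  \row_(i < n) derive f x (delta_mx ord0 i : V).

Definition convex_setv (C : set V) : Prop :=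
  forall x y (t : R), C x -> C y -> 0 <= t <= 1 -> C (t *: x + (1 - t) *: y).

Definition affine_hull (C : set V) : set V :=
  [set x | exists (m : nat) (p : 'I_m -> V) (w : 'I_m -> R),
      (forall i, C (p i)) /\ \sum_(i < m) w i = 1 /\ x = \sum_(i < m) w i *: p i].

Definition relint (C : set V) : set V :=
  [set x | C x /\ exists2 e : R, 0 < e &
      forall y, affine_hull C y -> ball x e y -> C y].

Definition convex_on (A : set V) (g : V -> R) : Prop :=
  forall x y (t : R), A x -> A y -> 0 <= t <= 1 ->
    g (t *: x + (1 - t) *: y) <= t * g x + (1 - t) * g y.

Definition domv (phi : V -> \bar R) : set V := [set x | (phi x < +oo)%E].

Definition proper_fun (phi : V -> \bar R) : Prop :=
  (forall x, phi x != -oo%E) /\ (exists x, (phi x < +oo)%E).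

Definition strictly_convex (phi : V -> \bar R) : Prop :=
  forall x y (t : R), domv phi x -> domv phi y -> x != y -> 0 < t < 1 ->
    (phi ((1 - t) *: x + t *: y)%R < ((1 - t)%:E * phi x + t%:E * phi y))%E.

(* real-valued version of phi (phi is finite on its domain when proper) *)
Definition finv (phi : V -> \bar R) : V -> R := fun x => fine (phi x).

Definition essentially_smooth (phi : V -> \bar R) : Prop :=
  let D := interior (domv phi) in
  (D !=set0) /\
  (forall x, D x -> differentiable (finv phi) x) /\
  (forall (u : nat -> V) (z : V), (forall k, D (u k)) ->
      (closure D `\` D) z -> u @ \oo --> z ->
      (fun k => Num.sqrt (dotv (gradv (finv phi) (u k)) (gradv (finv phi) (u k))))
        @ \oo --> +oo).

Definition legendre (phi : V -> \bar R) : Prop :=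
  [/\ proper_fun phi, lower_semicontinuous phi, strictly_convex phi
    & essentially_smooth phi].

Definition bregman (phi : V -> \bar R) (x y : V) : R :=
  finv phi x - finv phi y - dotv (gradv (finv phi) y) (x - y).

Definition rel_smooth (L : R) (f : V -> R) (phi : V -> \bar R) (C : set V) :=
  convex_on (relint C) (fun x => L * finv phi x - f x).

Definition rel_strongly_convex (mu : R) (f : V -> R) (phi : V -> \bar R)
  (C : set V) :=
  convex_on (relint C) (fun x => f x - mu * finv phi x).

End Defs.

From Pilot Require Import Defs.
From HB Require Import structures.
From mathcomp Require Import all_boot all_order all_algebra.
From mathcomp Require Import all_classical all_reals all_analysis.
From mathcomp Require Import ring lra.
Import Order.TTheory GRing.Theory Num.Theory.
Import numFieldNormedType.Exports.
Local Open Scope classical_set_scope.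
Local Open Scope ring_scope.

(* For differentiable g write D_g(x, y) = g x - g y - <grad g y, x - y>.  On a
   convex set, g is convex iff D_g >= 0 (tangent planes lie below the graph;
   conversely the tangent inequalities at a convex combination z, averaged with
   the same weights, give convexity).  Since D_g is linear in g, L phi - f is
   convex on relint C iff D_f <= L D_phi, and f - mu phi is convex iff
   D_f >= mu D_phi.  Euler's identity f x = <x, grad f x> turns D_f(x, y) into
   <x, grad f x - grad f y>. *)

Section Dotv.
Context {R : realType} {n : nat}.
Implicit Types u v w : 'rV[R]_n.

Lemma dotvC u v : dotv u v = dotv v u.
Proof. by apply: eq_bigr => i _; rewrite mulrC. Qed.

Lemma dotvDr u v w : dotv u (v + w) = dotv u v + dotv u w.
Proof. by rewrite /dotv -big_split; apply: eq_bigr => i _; rewrite mxE mulrDr. Qed.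

Lemma dotvZr (a : R) u v : dotv u (a *: v) = a * dotv u v.
Proof. by rewrite /dotv mulr_sumr; apply: eq_bigr => i _; rewrite mxE mulrCA. Qed.

Lemma dotv0r u : dotv u 0 = 0.
Proof. by rewrite -(scale0r 0) dotvZr mul0r. Qed.

Lemma dotvBr u v w : dotv u (v - w) = dotv u v - dotv u w.
Proof. by rewrite dotvDr -scaleN1r dotvZr mulN1r. Qed.

Lemma dotvZl (a : R) u v : dotv (a *: u) v = a * dotv u v.
Proof. by rewrite dotvC dotvZr dotvC. Qed.

Lemma dotvBl u v w : dotv (u - v) w = dotv u w - dotv v w.
Proof. by rewrite dotvC dotvBr !(dotvC w). Qed.

End Dotv.

Section LinearizationGap.
Context {R : realType} {n : nat}.
Notation V := 'rV[R]_n.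
Implicit Types (g h : V -> R) (x y : V).

Lemma dotv_gradv g x v : differentiable g x -> dotv (gradv g x) v = 'D_v g x.
Proof.
move=> dg; rewrite deriveE // {2}(row_sum_delta v) linear_sum.
by apply: eq_bigr => i _; rewrite mxE linearZ /= mulrC deriveE.
Qed.

Lemma gradvB g h x : differentiable g x -> differentiable h x ->
  gradv (fun z => g z - h z) x = gradv g x - gradv h x.
Proof.
move=> dg dh; apply/rowP => i; rewrite !mxE.
exact: (deriveB (diff_derivable dg) (diff_derivable dh)).
Qed.

Lemma gradvMl (k : R) g x : differentiable g x ->
  gradv (fun z => k * g z) x = k *: gradv g x.
Proof.
move=> dg; apply/rowP => i; rewrite !mxE.
exact: (deriveZ k (diff_derivable dg)).
Qed.

(* [bregman phi] unfolds to [lin_gap (Defs.finv phi)]. *)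
Definition lin_gap g x y : R := g x - g y - dotv (gradv g y) (x - y).

Lemma lin_gapB g h x y : differentiable g y -> differentiable h y ->
  lin_gap (fun z => g z - h z) x y = lin_gap g x y - lin_gap h x y.
Proof. by move=> dg dh; rewrite /lin_gap gradvB // dotvBl; ring. Qed.

Lemma lin_gapMl (k : R) g x y : differentiable g y ->
  lin_gap (fun z => k * g z) x y = k * lin_gap g x y.
Proof. by move=> dg; rewrite /lin_gap gradvMl // dotvZl; ring. Qed.

Lemma lin_gap_euler g x y :
  g x = dotv x (gradv g x) -> g y = dotv y (gradv g y) ->
  lin_gap g x y = dotv x (gradv g x - gradv g y).
Proof.
rewrite /lin_gap => -> ->; rewrite !dotvBr (dotvC (gradv g y) x) (dotvC (gradv g y) y).
ring.
Qed.

End LinearizationGap.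

Section FirstOrderConvexity.
Context {R : realType} {n : nat}.
Notation V := 'rV[R]_n.
Implicit Types (A : set V) (g : V -> R).

Lemma convex_on_lin_gap_ge0 A g x y : convex_on A g -> A x -> A y ->
  differentiable g y -> 0 <= lin_gap g x y.
Proof.
move=> cvx_g Ax Ay dg; rewrite subr_ge0 dotv_gradv //.
have quotient_cvg := cvg_dnbhs_at_right (diff_derivable (v := x - y) dg).
apply: (cvgr_to_le quotient_cvg); near=> t.
have t_gt0 : 0 < t by near: t; exact: nbhs_right_gt.
have t_lt1 : t < 1 by near: t; exact: nbhs_right_lt.
have t_01 : 0 <= t <= 1 by rewrite (ltW t_gt0) (ltW t_lt1).
have le_chord := cvx_g x y t Ax Ay t_01.
rewrite /= (_ : t *: (x - y) + y = t *: x + (1 - t) *: y); last first.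
  by rewrite scalerBr scalerBl scale1r addrA addrAC.
rewrite /= ler_pdivrMl //; lra.
Unshelve. all: end_near.
Qed.

Lemma lin_gap_ge0_convex_on A g : convex_setv A ->
  (forall x y, A x -> A y -> 0 <= lin_gap g x y) -> convex_on A g.
Proof.
move=> cvx_A gap_ge0 x y t Ax Ay /andP[t_ge0 t_le1].
set z := t *: x + (1 - t) *: y.
have Az : A z by apply: cvx_A => //; rewrite t_ge0 t_le1.
have gap_x := gap_ge0 x z Ax Az; have gap_y := gap_ge0 y z Ay Az.
have tangents_cancel :
    t * dotv (gradv g z) (x - z) + (1 - t) * dotv (gradv g z) (y - z) = 0.
  rewrite -!dotvZr -dotvDr !scalerBr addrACA -opprD -scalerDl -/z.
  by rewrite subrKC scale1r subrr dotv0r.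
have one_sub_t_ge0 : 0 <= 1 - t by rewrite subr_ge0.
have := mulr_ge0 t_ge0 gap_x; have := mulr_ge0 one_sub_t_ge0 gap_y.
rewrite /lin_gap; lra.
Qed.

Lemma convex_onP A g : convex_setv A -> (forall y, A y -> differentiable g y) ->
  convex_on A g <-> forall x y, A x -> A y -> 0 <= lin_gap g x y.
Proof.
move=> cvx_A dg; split; last exact: lin_gap_ge0_convex_on.
by move=> cvx_g x y Ax Ay; exact: convex_on_lin_gap_ge0 cvx_g Ax Ay (dg y Ay).
Qed.

End FirstOrderConvexity.

Section RelativeInterior.
Context {R : realType} {n : nat}.
Notation V := 'rV[R]_n.
Implicit Types (C : set V) (x y w : V).

Lemma affine_hull_comb C w y (a : R) :
  affine_hull C w -> C y -> affine_hull C (a *: w + (1 - a) *: y).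
Proof.
case=> m [p [wt [Cp [sum_wt ->]]]] Cy.
exists m.+1, (fun i => if unlift ord0 i is Some j then p j else y),
  (fun i => if unlift ord0 i is Some j then a * wt j else 1 - a).
split; first by move=> i; case: (unlift ord0 i).
rewrite !big_ord_recl /= !unlift_none.
under eq_bigr do rewrite liftK.
split; first by rewrite -mulr_sumr sum_wt mulr1; ring.
rewrite addrC scaler_sumr; congr (_ + _); apply: eq_bigr => i _.
by rewrite liftK scalerA.
Qed.

(* If [w] is close to [t x + (1 - t) y] in aff C, then the point [x'] with
   [w = t x' + (1 - t) y] is [t^-1]-times closer to [x], hence in C. *)
Lemma relint_convex C : convex_setv C -> convex_setv (relint C).
Proof.
move=> cvx_C x y t [Cx [e e_gt0 ball_xC]] relint_y /andP[t_ge0 t_le1].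
have [->|t_neq0] := eqVneq t 0; first by rewrite scale0r add0r subr0 scale1r.
have [Cy _] := relint_y.
have t_gt0 : 0 < t by rewrite lt_def t_neq0.
split; first by apply: cvx_C => //; rewrite t_ge0 t_le1.
exists (t * e) => [|w aff_w near_w]; first by rewrite mulr_gt0.
set x' := t^-1 *: w + (1 - t^-1) *: y.
have near_x' : ball x e x'.
  rewrite -ball_normE /=.
  have -> : x - x' = t^-1 *: (t *: x + (1 - t) *: y - w).
    by apply/matrixP => i j; rewrite /x' !mxE; field.
  rewrite normrZ gtr0_norm ?invr_gt0 // ltr_pdivrMl //.
  by rewrite -ball_normE in near_w.
have aff_x' : affine_hull C x' by exact: affine_hull_comb.
have Cx' := ball_xC x' aff_x' near_x'.
have -> : w = t *: x' + (1 - t) *: y.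
  rewrite /x' scalerDr !scalerA mulfV // scale1r mulrBr mulr1 mulfV //.
  by rewrite -addrA -scalerDl addrA subrK subrr scale0r addr0.
by apply: cvx_C => //; rewrite t_ge0 t_le1.
Qed.

End RelativeInterior.

Section RelativeSmoothness.
Context {R : realType} {n : nat}.
Notation V := 'rV[R]_n.
Variables (C : set V) (phi : V -> \bar R) (f : V -> R).
Hypothesis cvx_C : convex_setv C.
Hypothesis dphi : forall x, relint C x -> differentiable (Defs.finv phi) x.
Hypothesis df : forall x, relint C x -> differentiable f x.

Lemma rel_smoothP (L : R) : rel_smooth L f phi C <->
  forall x y, relint C x -> relint C y -> lin_gap f x y <= L * bregman phi x y.
Proof.
have gapE x y : relint C y ->
    lin_gap (fun z => L * Defs.finv phi z - f z) x y = L * bregman phi x y - lin_gap f x y.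
  move=> /[dup] /dphi dphi_y /df df_y.
  by rewrite lin_gapB ?lin_gapMl //; exact: differentiableZ.
rewrite /rel_smooth convex_onP; last 2 first.
- exact: relint_convex.
- by move=> y Cy; exact: differentiableB (differentiableZ L (dphi _ Cy)) (df _ Cy).
by split=> gap x y Cx Cy; move: (gap x y Cx Cy); rewrite gapE // subr_ge0.
Qed.

Lemma rel_strongly_convexP (mu : R) : rel_strongly_convex mu f phi C <->
  forall x y, relint C x -> relint C y -> mu * bregman phi x y <= lin_gap f x y.
Proof.
have gapE x y : relint C y ->
    lin_gap (fun z => f z - mu * Defs.finv phi z) x y = lin_gap f x y - mu * bregman phi x y.
  move=> /[dup] /dphi dphi_y /df df_y.
  by rewrite lin_gapB ?lin_gapMl //; exact: differentiableZ.
rewrite /rel_strongly_convex convex_onP; last 2 first.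
- exact: relint_convex.
- by move=> y Cy; exact: differentiableB (df _ Cy) (differentiableZ mu (dphi _ Cy)).
by split=> gap x y Cx Cy; move: (gap x y Cx Cy); rewrite gapE // subr_ge0.
Qed.

End RelativeSmoothness.

Lemma legendre_differentiable {R : realType} {n : nat} (phi : 'rV[R]_n -> \bar R) x :
  legendre phi -> interior (domv phi) x -> differentiable (Defs.finv phi) x.
Proof. by case=> _ _ _ [_ [dphi _]]; exact: dphi. Qed.

Theorem mainTheorem3 (R : realType) (n : nat) (C : set 'rV[R]_n)
  (phi : 'rV[R]_n -> \bar R) (f : 'rV[R]_n -> R) :
  convex_setv C ->
  legendre phi ->
  C `<=` domv phi ->
  relint C `<=` interior (domv phi) ->
  (forall x, relint C x -> differentiable f x) ->
  (forall x, relint C x -> f x = dotv x (gradv f x)) ->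
  (forall L : R, 0 < L ->
     (rel_smooth L f phi C <->
      (forall x y, relint C x -> relint C y ->
         dotv x (gradv f x - gradv f y) <= L * bregman phi x y))) /\
  (forall mu : R, 0 < mu ->
     (rel_strongly_convex mu f phi C <->
      (forall x y, relint C x -> relint C y ->
         dotv x (gradv f x - gradv f y) >= mu * bregman phi x y))).
Proof.
move=> cvx_C leg_phi _ relint_dom df euler.
have dphi x : relint C x -> differentiable (Defs.finv phi) x.
  by move=> /relint_dom; exact: legendre_differentiable.
have gapE x y : relint C x -> relint C y ->
    lin_gap f x y = dotv x (gradv f x - gradv f y).
  by move=> Cx Cy; exact: lin_gap_euler (euler x Cx) (euler y Cy).
split=> [L _ | mu _].
- rewrite rel_smoothP //.
  by split=> gap x y Cx Cy; move: (gap x y Cx Cy); rewrite gapE.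
- rewrite rel_strongly_convexP //.
  by split=> gap x y Cx Cy; move: (gap x y Cx Cy); rewrite gapE.
Qed.
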